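(* Assume the standing assumptions below. Let $\{u^{(k)}=w_{i_k}\cdots w_{j_k}\}_{k\ge0}$ be a $\Delta$-sequence whose signed left stretches $\sigma^{(k)}=\sigma$ and signed right stretches $\rho^{(k)}=\rho$ are constant for all $k\ge1$. Let $A$ be the incidence matrix of $h$ and $\mathbf 1$ the all-ones row vector of length $|\Sigma|$. Then there exist integral column vectors $U,V,X,Y$ of length $|\Sigma|$, with $U,V$ nonnegative and nonzero, and a constant $c$, such that for all $k\ge0$: $i_k=\mathbf 1\big(A^kV+(\sum_{n=0}^{k-1}A^n)X\big)$; $j_k=i_k+\mathbf 1\big(A^kU+(\sum_{n=0}^{k-1}A^n)Y\big)-1$; and $j_k/i_k<c$.
   Context: Standing assumptions: $\Sigma=\{0,\dots,n-1\}$ is a finite alphabet; $h:\Sigma^*\to\Sigma^*$ is a nonerasing morphism prolongable on $w_0$ and $\mathbf w=w_0w_1w_2\cdots=h^\omega(w_0)$ is aperiodic; $h$ satisfies $\mathrm{alph}(h^n(a))=\mathrm{alph}(h(a))$ for all $a$, $n\ge1$ ($\mathrm{alph}(w)$ = set of letters of $w$); $M=\max\{|h(a)|:a\in\Sigma\}$; $\Delta\subsetneq\Sigma$ nonempty, $\overline\Delta=\Sigma\setminus\Delta$. Positions are indexed from $0$. The incidence matrix $A=(a_{i,j})$ of $h$ has $a_{i,j}=|h(j)|_i$ (number of occurrences of letter $i$ in $h(j)$). A factor $w_i\cdots w_j$ is a $\Delta$-block if all its letters are in $\Delta$; maximal if also $w_{j+1}\in\overline\Delta$ and ($i=0$ or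 $w_{i-1}\in\overline\Delta$). Occurrences are factors with position intervals; $u'\prec u$ means interval containment. Since $\mathbf w=h(w_0)h(w_1)\cdots$, $h(w_p\cdots w_q)$ denotes the occurrence occupying the positions of blocks $h(w_p),\dots,h(w_q)$. A $\Delta$-sequence is a sequence $u^{(k)}=w_{i_k}\cdots w_{j_k}$ ($k\ge0$) of maximal $\Delta$-blocks with $i_k>M$, $|u^{(k)}|>M^2$, and $h(w_{i_k+M}\cdots w_{j_k-M})\prec u^{(k+1)}\prec h(w_{i_k-M+1}\cdots w_{j_k+M-1})$. Stretches: let $h(w_{i_k})$ occupy positions $r_{k+1},\dots,s_{k+1}$ and $h(w_{j_k})$ occupy $m_{k+1},\dots,n_{k+1}$. Left stretch $\sigma^{(k+1)}$: positive word $w_{i_{k+1}}\cdots w_{r_{k+1}-1}$ if $i_{k+1}<r_{k+1}$; negative word $w_{r_{k+1}}\cdots w_{i_{k+1}-1}$ if $i_{k+1}>r_{k+1}$; $\epsilon$ if equal. Right stretch $\rho^{(k+1)}$: positive word $w_{n_{k+1}+1}\cdots w_{j_{k+1}}$ if $j_{k+1}>n_{k+1}$; negative word $w_{j_{k+1}+1}\cdots w_{n_{k+1}}$ if $j_{k+1}<n_{k+1}$; $\epsilon$ if equal. Stretches are pairs (word, sign). *)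

From HB Require Import structures.
From mathcomp Require Import all_boot all_order all_algebra.
Set Implicit Arguments. Unset Strict Implicit. Unset Printing Implicit Defensive.
Import Order.TTheory GRing.Theory Num.Theory.

(* Alphabet Sigma = 'I_n = {0,...,n-1}.  A morphism h : Sigma^* -> Sigma^* is
   given by the images of the letters, h : 'I_n -> seq 'I_n. *)

Section Morphic.
Variables (n : nat) (h : 'I_n -> seq 'I_n) (w0 : 'I_n).

Definition hstar (s : seq 'I_n) : seq 'I_n := flatten (map h s).
Definition hpow (k : nat) (s : seq 'I_n) : seq 'I_n := iter k hstar s.

Definition nonerasing : Prop := forall a, h a != [::].
Definition prolongable : Prop := exists x, h w0 = w0 :: x /\ x != [::].

(* the fixed point w = h^omega(w0), as a function of the position (from 0):
   letter i of w is letter i of h^(i+1)(w0) (which has length >= i+2 when h is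
   nonerasing and prolongable on w0) *)
Definition wfix (i : nat) : 'I_n := nth w0 (hpow i.+1 [:: w0]) i.

Definition aperiodic (w : nat -> 'I_n) : Prop :=
  ~ (exists p N, 0 < p /\ forall i, N <= i -> w (i + p) = w i).

Definition alph_stable : Prop :=
  forall (a : 'I_n) (k : nat), 0 < k -> hpow k [:: a] =i h a.

Definition Mh : nat := \max_(a : 'I_n) size (h a).

(* starting position of the block h(w_p) in w = h(w_0) h(w_1) ... ;
   h(w_p) occupies positions hpos p, ..., hpos (p+1) - 1 *)
Definition hpos (p : nat) : nat := \sum_(q < p) size (h (wfix q)).

(* factor w_a ... w_(b-1) (empty if b <= a) *)
Definition factor (a b : nat) : seq 'I_n := mkseq (fun t => wfix (a + t)) (b - a).

Definition max_block (D : {set 'I_n}) (i j : nat) : Prop :=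
  [/\ i <= j, (forall p, i <= p <= j -> wfix p \in D),
      wfix j.+1 \notin D & (i = 0 \/ wfix i.-1 \notin D)].

Definition Delta_sequence (D : {set 'I_n}) (i j : nat -> nat) : Prop :=
  forall k,
  [/\ max_block D (i k) (j k), Mh < i k, Mh ^ 2 < j k - i k + 1,
      (* h(w_(i_k+M) ... w_(j_k-M)) is contained in u^(k+1) *)
      i k.+1 <= hpos (i k + Mh) /\ hpos (j k - Mh).+1 <= (j k.+1).+1 &
      (* u^(k+1) is contained in h(w_(i_k-M+1) ... w_(j_k+M-1)) *)
      hpos (i k - Mh).+1 <= i k.+1 /\ j k.+1 < hpos (j k + Mh)].

End Morphic.

Inductive stretch (n : nat) : Type :=
  | SPos of seq 'I_n
  | SNeg of seq 'I_n
  | SEps.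
Arguments SEps {n}.

Section Stretch.
Variables (n : nat) (h : 'I_n -> seq 'I_n) (w0 : 'I_n).
Local Notation hpos := (hpos h w0).
Local Notation factor := (factor h w0).

(* left stretch sigma^(k+1), with r_(k+1) = hpos (i k) *)
Definition left_stretch (i : nat -> nat) (k : nat) : stretch n :=
  let r := hpos (i k) in
  if i k.+1 < r then SPos (factor (i k.+1) r)
  else if r < i k.+1 then SNeg (factor r (i k.+1))
  else SEps.

(* right stretch rho^(k+1), with n_(k+1) = hpos (j k + 1) - 1 *)
Definition right_stretch (j : nat -> nat) (k : nat) : stretch n :=
  let e := hpos (j k).+1 in
  if e <= j k.+1 then SPos (factor e (j k.+1).+1)
  else if (j k.+1).+1 < e then SNeg (factor (j k.+1).+1 e)
  else SEps.

Definition incidence : 'M[int]_n :=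
  \matrix_(x, y) Posz (count_mem x (h y)).
End Stretch.

Definition ones_row (n : nat) : 'rV[int]_n := const_mx 1%R.

From HB Require Import structures.
From mathcomp Require Import all_boot all_order all_algebra.
Import Order.TTheory GRing.Theory Num.Theory.
Set Implicit Arguments. Unset Strict Implicit. Unset Printing Implicit Defensive.

(* Write P(p) for the Parikh vector (letter-count column vector)
   of the prefix w_0 ... w_(p-1) of the fixed point w.  Since w = h(w), the
   image h(w_0 ... w_(p-1)) is the prefix of length hpos p, so
   P(hpos p) = A P(p).  The left stretch measures exactly the gap between
   i_(k+1) and hpos (i_k), hence P(i_(k+1)) = A P(i_k) + X for a correction X
   determined by the stretch; likewise P(j_(k+1)+1) = A P(j_k+1) + Z.  With
   constant stretches these are affine recurrences, which unfold to the stated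
   closed forms with V = P(i_0), U = Parikh vector of u^(0), Y = Z - X; the
   all-ones row vector turns a Parikh vector into a length.
   For the ratio, the letter b = w_(j_0+1) lies outside Delta and, since
   alph(h^t(a)) does not depend on t >= 1, occurs in every "window"
   h^t(x) of w = w_0 x h(x) h^2(x) ...  Hence the maximal block starting at
   i_k ends before the window after the one containing i_k, which gives
   j_k < M^2 i_k; so c = M^2 works. *)

Section Words.
Variables (n : nat) (h : 'I_n -> seq 'I_n).

Lemma hstar_cat s t : hstar h (s ++ t) = hstar h s ++ hstar h t.
Proof. by rewrite /hstar map_cat flatten_cat. Qed.

Lemma hpowS k s : hpow h k.+1 s = hpow h k (hstar h s).
Proof. by rewrite /hpow iterSr. Qed.

Lemma hpow_cat k s t : hpow h k (s ++ t) = hpow h k s ++ hpow h k t.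
Proof. by elim: k => [//|k IH]; rewrite /= IH hstar_cat. Qed.

Lemma size_hstar_ge : nonerasing h -> forall s, size s <= size (hstar h s).
Proof.
move=> Hne; elim=> [//|a s IH]; rewrite /hstar /= -/(hstar h s) size_cat.
by rewrite -add1n leq_add // lt0n size_eq0 Hne.
Qed.

Lemma size_hpow_ge : nonerasing h -> forall k s, size s <= size (hpow h k s).
Proof.
move=> Hne; elim=> [//|k IH] s.
exact: leq_trans (IH s) (size_hstar_ge Hne _).
Qed.

Lemma size_hstar_le s : size (hstar h s) <= Mh h * size s.
Proof.
elim: s => [|a s IH]; first by rewrite muln0.
rewrite /hstar /= -/(hstar h s) size_cat mulnS leq_add //.
exact: (leq_bigmax (F := fun a => size (h a)) a).
Qed.

Lemma mem_hpow k s b : alph_stable h -> 0 < k ->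
  (b \in hpow h k s) = (b \in hpow h 1 s).
Proof.
move=> Hal k0; elim: s => [|a s IH]; first by rewrite /hpow !iter_fix.
by rewrite -cat1s !hpow_cat !mem_cat IH (Hal a k k0) orbF.
Qed.

End Words.

Section Factors.
Variables (n : nat) (h : 'I_n -> seq 'I_n) (w0 : 'I_n).
Local Notation w := (wfix h w0).
Local Notation factor := (factor h w0).

Lemma size_factor a b : size (factor a b) = b - a.
Proof. exact: size_mkseq. Qed.

Lemma factorE a b : factor a b = map w (iota a (b - a)).
Proof.
have -> : iota a (b - a) = map (addn a) (iota 0 (b - a)) by rewrite -iotaDl addn0.
by rewrite /factor /mkseq -map_comp.
Qed.

Lemma factor_split a b c : a <= b -> b <= c ->
  factor a c = factor a b ++ factor b c.
Proof.
move=> ab bc; rewrite !factorE -map_cat.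
have -> : c - a = (b - a) + (c - b) by rewrite addnC addnBA // subnK.
by rewrite iotaD subnKC.
Qed.

Lemma hposS p : hpos h w0 p.+1 = hpos h w0 p + size (h (w p)).
Proof. by rewrite /hpos big_ord_recr. Qed.

End Factors.

Section Parikh.
Variables (n : nat) (h : 'I_n -> seq 'I_n).
Local Open Scope ring_scope.

Definition parikh (s : seq 'I_n) : 'cV[int]_n := \col_x (count_mem x s)%:Z.

Lemma parikh_cat s t : parikh (s ++ t) = parikh s + parikh t.
Proof. by apply/matrixP => x y; rewrite !mxE count_cat PoszD. Qed.

Lemma parikh_hstar s : parikh (hstar h s) = incidence h *m parikh s.
Proof.
elim: s => [|a s IH].
  by apply/matrixP => x y; rewrite !mxE big1 // => z _; rewrite !mxE mulr0.
rewrite /hstar /= -/(hstar h s) parikh_cat IH -cat1s parikh_cat mulmxDr.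
congr (_ + _); apply/matrixP => x y; rewrite !mxE (bigD1 a) //= big1 ?addr0.
  by rewrite !mxE /= eqxx addn0 mulr1.
by move=> z za; rewrite !mxE /= eq_sym (negbTE za) mulr0.
Qed.

Lemma ones_parikh s : (ones_row n *m parikh s) 0 0 = (size s)%:Z.
Proof.
rewrite !mxE; under eq_bigr do rewrite !mxE mul1r.
elim: s => [|a s IH]; first by rewrite big1.
under eq_bigr do rewrite /= PoszD.
rewrite big_split /= IH (bigD1 a) //= big1 ?eqxx ?addr0 -?PoszD //.
by move=> z za; rewrite eq_sym (negbTE za).
Qed.

Lemma parikh_neq0 s : s != [::] -> parikh s != 0.
Proof.
move=> s0; apply: contraNneq s0 => /(congr1 (fun v => (ones_row n *m v) 0 0)).
by rewrite ones_parikh mulmx0 mxE => /eqP; rewrite -size_eq0.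
Qed.

End Parikh.

Section AffineRecurrence.
Local Open Scope ring_scope.

Lemma affine_rec_closed (R : pzRingType) (n : nat) (A : 'M[R]_n)
  (F : nat -> 'cV[R]_n) (C : 'cV[R]_n) :
  (forall k, F k.+1 = A *m F k + C) ->
  forall k, F k = A ^+ k *m F 0 + (\sum_(m < k) A ^+ m) *m C.
Proof.
move=> HF; elim=> [|k IH]; first by rewrite expr0 big_ord0 mul1mx mul0mx addr0.
have powS m : A ^+ m.+1 = A *m A ^+ m by rewrite exprS mulmxE.
have shift : \sum_(m < k) A ^+ lift ord0 m = A *m \sum_(m < k) A ^+ m.
  by rewrite mulmx_sumr; apply: eq_bigr => m _; rewrite powS.
rewrite HF IH mulmxDr !mulmxA -powS big_ord_recl expr0 shift mulmxDl -idmxE.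
by rewrite mul1mx -addrA [C + _]addrC.
Qed.

End AffineRecurrence.

Section FixedPoint.
Variables (n : nat) (h : 'I_n -> seq 'I_n) (w0 : 'I_n) (x : seq 'I_n).
Hypotheses (Hx : h w0 = w0 :: x) (Hx0 : x != [::]) (Hne : nonerasing h).
Local Notation w := (wfix h w0).
Local Notation factor := (factor h w0).
Local Notation hpos := (hpos h w0).

Definition plen t := size (hpow h t [:: w0]).

(* h^(t+1)(w0) = h^t(w0) h^t(x): the prefixes h^t(w0) are nested, and the
   t-th window h^t(x) occupies positions plen t, ..., plen (t+1) - 1. *)
Lemma hpow_w0S t : hpow h t.+1 [:: w0] = hpow h t [:: w0] ++ hpow h t x.
Proof. by rewrite hpowS /hstar /= Hx cats0 -cat1s hpow_cat. Qed.

Lemma plenS t : plen t.+1 = plen t + size (hpow h t x).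
Proof. by rewrite /plen hpow_w0S size_cat. Qed.

Lemma plen_gt t : t < plen t.
Proof.
elim: t => [//|t IH]; rewrite plenS -addn1 leq_add //.
by apply: leq_trans (size_hpow_ge Hne t x); rewrite lt0n size_eq0.
Qed.

Lemma hpow_w0_prefix t d : exists s, hpow h (t + d) [:: w0] = hpow h t [:: w0] ++ s.
Proof.
elim: d => [|d [s IH]]; first by exists [::]; rewrite addn0 cats0.
by exists (s ++ hpow h (t + d) x); rewrite addnS hpow_w0S IH catA.
Qed.

Lemma wfix_nth t p : p < plen t -> w p = nth w0 (hpow h t [:: w0]) p.
Proof.
move=> Hp; rewrite /wfix.
have [s1 E1] := hpow_w0_prefix p.+1 t.
have [s2 E2] := hpow_w0_prefix t p.+1.
have Hp1 : p < plen p.+1 := ltnW (plen_gt p.+1).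
have -> : nth w0 (hpow h p.+1 [:: w0]) p = nth w0 (hpow h (p.+1 + t) [:: w0]) p.
  by rewrite E1 nth_cat Hp1.
by rewrite addnC E2 nth_cat Hp.
Qed.

Lemma factor0_take t m : m <= plen t -> factor 0 m = take m (hpow h t [:: w0]).
Proof.
move=> Hm; apply: (@eq_from_nth _ w0).
  by rewrite size_take size_factor subn0; case: ltngtP Hm => // ->.
move=> q; rewrite size_factor subn0 => Hq.
by rewrite nth_mkseq ?subn0 // nth_take // add0n (wfix_nth (t := t)) // (leq_trans Hq).
Qed.

Lemma size_hstar_factor p : size (hstar h (factor 0 p)) = hpos p.
Proof.
elim: p => [|p IH]; first by rewrite /hpos big_ord0.
rewrite (factor_split h w0 (leq0n p) (leqnSn p)) hstar_cat size_cat IH hposS.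
by rewrite /factor subSnn /= /hstar /= cats0 addn0.
Qed.

Lemma hstar_factor p : factor 0 (hpos p) = hstar h (factor 0 p).
Proof.
set S := hpow h p [:: w0].
have Hp : p <= plen p by apply: ltnW (plen_gt p).
have E : hstar h S = hstar h (take p S) ++ hstar h (drop p S)
  by rewrite -hstar_cat cat_take_drop.
rewrite (factor0_take (t := p.+1)); last first.
  by rewrite -size_hstar_factor /plen /= -/S (factor0_take Hp) E size_cat leq_addr.
by rewrite /= -/S E -size_hstar_factor (factor0_take Hp) take_size_cat.
Qed.

Lemma find_window p : plen 1 <= p -> exists t, 0 < t /\ plen t <= p < plen t.+1.
Proof.
move=> Hp.
have ub t : plen t <= p -> t <= p by move=> Ht; apply/ltnW/(leq_trans (plen_gt t)).
case: (ex_maxnP (ex_intro (fun t => plen t <= p) 1 Hp) ub) => t Ht tmax.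
exists t; split; first exact: tmax 1 Hp.
by rewrite Ht /= ltnNge; apply/negP => /tmax; rewrite ltnn.
Qed.

Lemma wfix_window t p : plen t <= p < plen t.+1 ->
  w p = nth w0 (hpow h t x) (p - plen t).
Proof.
case/andP=> H1 H2; rewrite (wfix_nth H2) hpow_w0S nth_cat -/(plen t).
by rewrite ltnNge H1.
Qed.

Lemma window_mem t b : b \in hpow h t x ->
  exists2 q, plen t <= q < plen t.+1 & w q = b.
Proof.
move=> Hb; have Hq : plen t <= plen t + index b (hpow h t x) < plen t.+1.
  by rewrite leq_addr plenS ltn_add2l index_mem.
by exists (plen t + index b (hpow h t x)); rewrite // (wfix_window Hq) addKn nth_index.
Qed.

Lemma letter_in_all_windows p t : alph_stable h -> plen 1 <= p -> 0 < t ->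
  exists2 q, plen t <= q < plen t.+1 & w q = w p.
Proof.
move=> Hal Hp t0; apply: window_mem.
have [s [s0 Hs]] := find_window Hp.
have Hin : w p \in hpow h s x.
  have /andP[Hs1 Hs2] := Hs.
  by rewrite (wfix_window Hs) mem_nth // -(ltn_add2l (plen s)) subnKC // -plenS.
by rewrite (mem_hpow _ _ Hal t0) -(mem_hpow _ _ Hal s0).
Qed.

Lemma plenS_le t : plen t.+1 <= Mh h * plen t.
Proof. exact: size_hstar_le. Qed.

Lemma plenSS_le t : plen t.+2 <= Mh h ^ 2 * plen t.
Proof.
apply: leq_trans (plenS_le t.+1) _; rewrite expnS -mulnA leq_mul2l.
by rewrite expn1 plenS_le orbT.
Qed.

Lemma plen1_le : plen 1 <= Mh h.
Proof.
by rewrite /plen /= /hstar /= cats0; exact: (leq_bigmax (F := fun a => size (h a)) w0).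
Qed.

End FixedPoint.

Section PrefixParikh.
Variables (n : nat) (h : 'I_n -> seq 'I_n) (w0 : 'I_n) (x : seq 'I_n).
Hypotheses (Hx : h w0 = w0 :: x) (Hx0 : x != [::]) (Hne : nonerasing h).
Local Notation factor := (factor h w0).
Local Notation hpos := (hpos h w0).
Local Open Scope ring_scope.

Definition prefix_parikh p := parikh (factor 0 p).

Lemma ones_prefix_parikh p : (ones_row n *m prefix_parikh p) 0 0 = p%:Z.
Proof. by rewrite ones_parikh size_factor subn0. Qed.

Lemma ones_prefix_parikhB p q :
  (ones_row n *m (prefix_parikh p - prefix_parikh q)) 0 0 = p%:Z - q%:Z.
Proof. by rewrite -!ones_prefix_parikh mulmxBr !mxE. Qed.

(* Consequence of w = h(w): P(hpos p) = A P(p). *)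
Lemma prefix_parikh_hpos p : prefix_parikh (hpos p) = incidence h *m prefix_parikh p.
Proof. by rewrite /prefix_parikh (hstar_factor Hx Hx0 Hne) parikh_hstar. Qed.

Definition left_corr (s : stretch n) : 'cV[int]_n :=
  match s with SPos u => - parikh u | SNeg u => parikh u | SEps => 0 end.
Definition right_corr (s : stretch n) : 'cV[int]_n :=
  match s with SPos u => parikh u | SNeg u => - parikh u | SEps => 0 end.

Lemma prefix_parikh_left (i : nat -> nat) k :
  prefix_parikh (i k.+1) =
  incidence h *m prefix_parikh (i k) + left_corr (left_stretch h w0 i k).
Proof.
rewrite -prefix_parikh_hpos /prefix_parikh /left_stretch.
case: ltngtP => [Hlt|Hgt|->] /=; last by rewrite addr0.
- by rewrite (factor_split h w0 (leq0n _) (ltnW Hlt)) parikh_cat addrK.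
- by rewrite (factor_split h w0 (leq0n _) (ltnW Hgt)) parikh_cat.
Qed.

Lemma prefix_parikh_right (j : nat -> nat) k :
  prefix_parikh (j k.+1).+1 =
  incidence h *m prefix_parikh (j k).+1 + right_corr (right_stretch h w0 j k).
Proof.
rewrite -prefix_parikh_hpos /prefix_parikh /right_stretch.
case: (leqP (hpos (j k).+1) (j k.+1)) => [Hle|Hgt] /=.
  by rewrite (factor_split h w0 (leq0n _) (leqW Hle)) parikh_cat.
case: ltnP => [Hlt|Hge] /=.
  by rewrite (factor_split h w0 (leq0n _) (ltnW Hlt)) parikh_cat addrK.
have -> : hpos (j k).+1 = (j k.+1).+1 by apply/eqP; rewrite eqn_leq Hge.
by rewrite addr0.
Qed.

Lemma prefix_parikh_left_closed (i : nat -> nat) (sigma : stretch n) :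
  (forall k, left_stretch h w0 i k = sigma) -> forall k,
  prefix_parikh (i k) = incidence h ^+ k *m prefix_parikh (i 0%N)
                        + (\sum_(m < k) incidence h ^+ m) *m left_corr sigma.
Proof.
move=> Hsig; apply: (affine_rec_closed (F := fun k => prefix_parikh (i k))) => k.
by rewrite prefix_parikh_left Hsig.
Qed.

Lemma prefix_parikh_right_closed (j : nat -> nat) (rho : stretch n) :
  (forall k, right_stretch h w0 j k = rho) -> forall k,
  prefix_parikh (j k).+1 = incidence h ^+ k *m prefix_parikh (j 0%N).+1
                           + (\sum_(m < k) incidence h ^+ m) *m right_corr rho.
Proof.
move=> Hrho; apply: (affine_rec_closed (F := fun k => prefix_parikh (j k).+1)) => k.
by rewrite prefix_parikh_right Hrho.
Qed.

End PrefixParikh.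

Lemma delta_sequence_ratio (n : nat) (h : 'I_n -> seq 'I_n) (w0 : 'I_n)
  (Hne : nonerasing h) (Hpro : prolongable h w0) (Halph : alph_stable h)
  (D : {set 'I_n}) (i j : nat -> nat) (Hseq : Delta_sequence h w0 D i j) k :
  j k < Mh h ^ 2 * i k.
Proof.
have [x [Hx Hx0]] := Hpro.
have plen1 := plen1_le h w0.
have [[ij0 _ Hj0 _] Mi0 _ _ _] := Hseq 0.
have [[_ Hink _ _] Mik _ _ _] := Hseq k.
(* b = w_(j_0+1), a letter outside D *)
have Hb : plen h w0 1 <= (j 0).+1.
  by apply: leq_trans plen1 (leq_trans (ltnW Mi0) (leqW ij0)).
have [t [t0 Ht]] := find_window Hx Hx0 Hne (leq_trans plen1 (ltnW Mik)).
have [q Hq Hqb] := letter_in_all_windows Hx Hx0 Hne Halph Hb (ltn0Sn t).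
have jq : j k < q.
  rewrite ltnNge; apply/negP => qj.
  have : wfix h w0 q \in D.
    apply: Hink; rewrite qj andbT; apply/ltnW/(leq_trans (proj2 (andP Ht))).
    by case/andP: Hq.
  by rewrite Hqb (negbTE Hj0).
(* q lies in window t+1, whose end is at most M^2 plen t <= M^2 i_k *)
apply/(leq_trans jq)/ltnW/(leq_trans (proj2 (andP Hq)))/(leq_trans (plenSS_le h w0 t)).
by rewrite leq_mul2l; case/andP: Ht => -> _; rewrite orbT.
Qed.

Local Open Scope ring_scope.

Theorem lemma15 (n : nat) (h : 'I_n -> seq 'I_n) (w0 : 'I_n)
  (Hne : nonerasing h) (Hpro : prolongable h w0)
  (Hap : aperiodic (wfix h w0)) (Halph : alph_stable h)
  (D : {set 'I_n}) (HD0 : D != set0) (HDT : D != setT)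
  (i j : nat -> nat) (Hseq : Delta_sequence h w0 D i j)
  (sigma rho : stretch n)
  (Hsig : forall k : nat, left_stretch h w0 i k = sigma)
  (Hrho : forall k : nat, right_stretch h w0 j k = rho) :
  let A := incidence h in
  exists (U V X Y : 'cV[int]_n) (c : rat),
    [/\ (forall x, 0 <= U x 0), U != 0, (forall x, 0 <= V x 0), V != 0 &
      forall k : nat,
        [/\ (i k)%:Z = (ones_row n *m (A ^+ k *m V + (\sum_(m < k) A ^+ m) *m X)) 0 0,
            (j k)%:Z = (i k)%:Z + (ones_row n *m (A ^+ k *m U + (\sum_(m < k) A ^+ m) *m Y)) 0 0 - 1
          & (j k)%:Q / (i k)%:Q < c]].
Proof.
move=> A; have [x [Hx Hx0]] := Hpro.
pose P p := prefix_parikh h w0 p.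
pose U := parikh (factor h w0 (i 0) (j 0).+1).
have [[ij0 _ _ _] Mi0 _ _ _] := Hseq 0%N.
have closedP := prefix_parikh_left_closed Hx Hx0 Hne Hsig.
have closedT := prefix_parikh_right_closed Hx Hx0 Hne Hrho.
have split0 : P (j 0%N).+1 = P (i 0%N) + U.
  by rewrite /P /U /prefix_parikh -parikh_cat -factor_split // leqW.
exists U, (P (i 0%N)), (left_corr sigma), (right_corr rho - left_corr sigma).
exists (Mh h ^ 2)%:R; split.
- by move=> y; rewrite mxE le0z_nat.
- by apply: parikh_neq0; rewrite -size_eq0 size_factor subn_eq0 -ltnNge ltnS.
- by move=> y; rewrite mxE le0z_nat.
- by apply: parikh_neq0; rewrite -size_eq0 size_factor subn_eq0 -ltnNge (leq_ltn_trans _ Mi0).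
move=> k; split.
- by rewrite -closedP ones_prefix_parikh.
- have -> : A ^+ k *m U + (\sum_(m < k) A ^+ m) *m (right_corr rho - left_corr sigma)
             = P (j k).+1 - P (i k).
    rewrite /P closedT closedP -/(P _) split0 mulmxBr mulmxDr opprD addrACA.
    by rewrite [_ *m P _ + _]addrC addrK.
  by rewrite ones_prefix_parikhB addrCA subrr addr0 -addn1 PoszD addrK.
- change ((j k)%:R / (i k)%:R < (Mh h ^ 2)%:R :> rat).
  have [_ Mik _ _ _] := Hseq k.
  have ik_pos : (0 < i k)%N by apply: leq_ltn_trans Mik.
  rewrite ltr_pdivrMr ?ltr0n //.
  by rewrite -natrM ltr_nat (delta_sequence_ratio Hne Hpro Halph Hseq).
Qed.
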